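(* In the setting below, the directed graph $\tilde H$ contains no red cycle and no blue cycle.
   Context: Setting: $G$ is a graph; $S_1,T_1,S_2,T_2\subseteq V(G)$ are pairwise disjoint sets of $k$ vertices each, all of degree $1$ in $G$, with $(S_1,T_1)$ and $(S_2,T_2)$ each routable in $G$ (i.e. connected by $k$ node-disjoint paths). $H$ is an $(S_1,T_1,S_2,T_2)$-minimal minor of $G$: a minor of $G$ containing the vertices of $S_1\cup T_1\cup S_2\cup T_2$ as vertices (each such $x$ corresponds to a branch set $\{x\}$), in which both pairs are routable, and such that for every edge $e$ of $H$, deleting $e$ or contracting $e$ destroys one of these properties. $\mathcal{R}$ is a set of $k$ node-disjoint paths routing $(S_1,T_1)$ in $H$ (''red paths'') and $\mathcal{B}$ a set of $k$ node-disjoint paths routing $(S_2,T_2)$ in $H$ (''blue paths''). $\tilde H$ is the directed graph on $V(H)$ containing each edge of a red path, directed along the path from $S_1$ to $T_1$ (a red edge), and each edge of a blue path, directed along the path from $S_2$ to $T_2$ (a blue edge). A blue cycle is a simple directed cycle $C$ in $\tilde H$ that can be partitioned into consecutive edge-disjoint segments $\sigma_1,\dots,\sigma_{2r}$, $r>0$, where each $\sigma_{2i}$ consists of a single red edge and each $\sigma_{2i-1}$ is a nonempty path consisting only of blue edges. A red cycle is defined the same way with the roles of red and blue exchanged. *)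

From mathcomp Require Import all_boot.
Set Implicit Arguments. Unset Strict Implicit. Unset Printing Implicit Defensive.

Section Defs.

Definition simple_graph (V : finType) (E : rel V) : Prop :=
  symmetric E /\ irreflexive E.

Definition degree (V : finType) (E : rel V) (x : V) : nat := #|[set y | E x y]|.

Definition ST_path (V : finType) (E : rel V) (S T : {set V}) (p : seq V) : bool :=
  if p is x :: p' then [&& path E x p', uniq p, x \in S & last x p' \in T]
  else false.

Definition routing (V : finType) (E : rel V) (S T : {set V}) (k : nat)
    (P : seq (seq V)) : Prop :=
  [/\ size P = k, all (ST_path E S T) P &
      pairwise (fun p q : seq V => [disjoint p & q]) P].

Definition routable (V : finType) (E : rel V) (S T : {set V}) (k : nat) : Prop :=
  exists P, routing E S T k P.

Definition connected_in (V : finType) (E : rel V) (A : {set V}) : Prop :=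
  forall u v, u \in A -> v \in A ->
    connect [rel x y | [&& E x y, x \in A & y \in A]] u v.

Definition minor_model (VG VH : finType) (EG : rel VG) (EH : rel VH)
    (phi : VH -> {set VG}) : Prop :=
  [/\ forall h, phi h != set0,
      forall h, connected_in EG (phi h),
      forall h h', h != h' -> [disjoint phi h & phi h'] &
      forall h h', EH h h' -> exists u v, [/\ u \in phi h, v \in phi h' & EG u v]].

Definition tlift (VG VH : finType) (phi : VH -> {set VG}) (S : {set VG}) : {set VH} :=
  [set h | [exists x in S, phi h == [set x]]].

(* every terminal x is a vertex of H, i.e. has branch set {x} *)
Definition terminals_ok (VG VH : finType) (S1 T1 S2 T2 : {set VG})
    (phi : VH -> {set VG}) : Prop :=
  forall x, x \in S1 :|: T1 :|: S2 :|: T2 -> exists h, phi h = [set x].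

Definition good_minor (VG : finType) (EG : rel VG) (S1 T1 S2 T2 : {set VG}) (k : nat)
    (VH : finType) (EH : rel VH) (phi : VH -> {set VG}) : Prop :=
  [/\ minor_model EG EH phi, terminals_ok S1 T1 S2 T2 phi,
      routable EH (tlift phi S1) (tlift phi T1) k &
      routable EH (tlift phi S2) (tlift phi T2) k].

Definition del_edge (V : finType) (E : rel V) (a b : V) : rel V :=
  fun u v => E u v && ~~ (((u == a) && (v == b)) || ((u == b) && (v == a))).

(* contraction of the edge ab: b is merged into a; vertex set V(H) \ {b} *)
Definition cvert (V : finType) (b : V) := {h : V | h != b}.

Definition contr_edge (V : finType) (E : rel V) (a b : V) : rel (cvert b) :=
  fun u v => (val u != val v) &&
    [|| E (val u) (val v), (val u == a) && E b (val v) | (val v == a) && E b (val u)].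

Arguments contr_edge {V} E a b.

Definition contr_model (VG V : finType) (phi : V -> {set VG}) (a b : V)
    : cvert b -> {set VG} :=
  fun w => if val w == a then phi a :|: phi b else phi (val w).

Arguments contr_model {VG V} phi a b.

Definition minimal_minor (VG : finType) (EG : rel VG) (S1 T1 S2 T2 : {set VG}) (k : nat)
    (VH : finType) (EH : rel VH) (phi : VH -> {set VG}) : Prop :=
  good_minor EG S1 T1 S2 T2 k EH phi /\
  forall a b, EH a b ->
    ~ good_minor EG S1 T1 S2 T2 k (del_edge EH a b) phi /\
    ~ good_minor EG S1 T1 S2 T2 k (contr_edge EH a b) (contr_model phi a b).

(* Arcs of the coloured digraph H~: (u, v, c) is an arc u -> v; c = true means
   it comes from a path of family Main, c = false from family Single. *)
Definition arc_in (V : finType) (Main Single : seq (seq V)) (a : V * V * bool) : bool :=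
  let: (u, v, c) := a in
  if c then has (infix [:: u; v]) Main else has (infix [:: u; v]) Single.

(* A simple directed cycle of H~ given by its cyclic list of arcs, partitioned
   (after choosing a starting point) into consecutive segments
   sigma_1 ... sigma_{2r}, r > 0, with sigma_{2i} a single Single-arc and
   sigma_{2i-1} a nonempty sequence of Main-arcs. *)
Definition alt_cycle (V : finType) (Main Single : seq (seq V)) : Prop :=
  exists cyc : seq (V * V * bool),
    [/\ cyc != [::],
        all (arc_in Main Single) cyc,
        map (fun a => a.1.2) cyc = rot 1 (map (fun a => a.1.1) cyc),
        uniq (map (fun a => a.1.1) cyc) &
        exists n (ss : seq (seq (V * V * bool))) r,
          [/\ 0 < r, size ss = 2 * r, rot n cyc = flatten ss &
              forall i, i < size ss ->
                let s := nth [::] ss i in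
                if odd i then (size s == 1) && all (fun a => ~~ a.2) s
                else (s != [::]) && all (fun a => a.2) s]].

(* blue cycle: blue segments, single red edges; red cycle: roles exchanged *)
Definition blue_cycle (V : finType) (R B : seq (seq V)) : Prop := alt_cycle B R.
Definition red_cycle (V : finType) (R B : seq (seq V)) : Prop := alt_cycle R B.

End Defs.

From mathcomp Require Import all_boot.
Set Implicit Arguments. Unset Strict Implicit. Unset Printing Implicit Defensive.

(* A red cycle contains a blue arc uv that is entered and left by red arcs
   (dually for blue cycles). Terminals have degree one, so neither u nor v is a
   terminal, and it suffices to show that contracting the edge uv keeps both
   pairs routable, against minimality. For the blue paths this is immediate.
   The red paths either traverse uv already, or are rerouted around the cycle:
   on reaching the head of a blue arc of the cycle they step back across it,
   which bypasses the red segments of the cycle and traverses uv from v to u.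
   Path systems are handled as partial successor functions, under which both
   contraction and rerouting are local operations. *)

(* k disjoint S-T paths presented by a partial successor function on the set of
   used vertices: the paths are read off by iterating [succ] from the sources. *)
Record linkage (V : finType) (E : rel V) (S T : {set V}) (k : nat)
    (succ : V -> option V) (used : pred V) (src : seq V) : Prop := Linkage {
  linkage_uniq : uniq src;
  linkage_size : size src = k;
  linkage_src_in : {subset src <= S};
  linkage_src_used : {subset src <= used};
  linkage_src_head : forall s x, s \in src -> used x -> succ x <> Some s;
  linkage_succ_used : forall x y, used x -> succ x = Some y -> used y;
  linkage_succ_edge : forall x y, used x -> succ x = Some y -> E x y;
  linkage_sink : forall x, used x -> succ x = None -> x \in T;
  linkage_succ_inj : forall x x' y,
    used x -> used x' -> succ x = Some y -> succ x' = Some y -> x = x'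
}.

Section LinkageWalks.
Variables (V : finType) (E : rel V) (S T : {set V}) (k : nat)
  (succ : V -> option V) (used : pred V) (src : seq V).
Hypothesis L : linkage E S T k succ used src.

Definition walk_step x := odflt x (succ x).
Definition walk_alive x n := forall i, i < n -> succ (iter i walk_step x) != None.

Lemma walk_alive_le x m n : m <= n -> walk_alive x n -> walk_alive x m.
Proof. by move=> le_mn al i lt_im; apply/al/(leq_trans lt_im). Qed.

Lemma walk_alive_succ x n : walk_alive x n.+1 ->
  succ (iter n walk_step x) = Some (iter n.+1 walk_step x).
Proof. by move=> /(_ n (ltnSn n)); rewrite /= /walk_step; case: (succ _). Qed.

Lemma walk_alive_used x n i : used x -> walk_alive x n -> i <= n -> used (iter i walk_step x).
Proof.
move=> ux al; elim: i => [//|i IHi] le_in.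
exact: (linkage_succ_used L (IHi (ltnW le_in)) (walk_alive_succ (walk_alive_le le_in al))).
Qed.

Lemma walk_alive_path x n : used x -> walk_alive x n ->
  path E x (traject walk_step (walk_step x) n).
Proof.
elim: n x => [//|n IHn] x ux al /=.
have sx : succ x = Some (walk_step x) by have := al 0 isT; rewrite /walk_step; case: (succ x).
apply/andP; split; first exact: (linkage_succ_edge L ux sx).
apply: IHn; first exact: (linkage_succ_used L ux sx).
by move=> i lt_in; rewrite -iterSr; apply: al.
Qed.

Lemma walk_iter_not_src s s' j : s \in src -> s' \in src -> walk_alive s' j.+1 ->
  iter j.+1 walk_step s' <> s.
Proof.
move=> sS s'S al e; have u := walk_alive_used (linkage_src_used L s'S) al (leqnSn j).
by apply: (linkage_src_head L sS u); rewrite (walk_alive_succ al) e.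
Qed.

Lemma walk_iter_inj s s' i j : s \in src -> s' \in src -> walk_alive s i -> walk_alive s' j ->
  iter i walk_step s = iter j walk_step s' -> s = s' /\ i = j.
Proof.
move=> sS s'S; elim: i j => [|i IHi] [|j] ali alj //=.
- by move=> /esym /(walk_iter_not_src sS s'S alj).
- by move=> /(walk_iter_not_src s'S sS ali).
move=> e; have ui := walk_alive_used (linkage_src_used L sS) ali (leqnSn i).
have uj := walk_alive_used (linkage_src_used L s'S) alj (leqnSn j).
have e' : iter i walk_step s = iter j walk_step s'.
  apply: (linkage_succ_inj L ui uj (walk_alive_succ ali)).
  by rewrite (walk_alive_succ alj); congr Some; apply/esym.
by case: (IHi j _ _ e') => [||-> ->]; [exact: walk_alive_le ali | exact: walk_alive_le alj |].
Qed.

Definition walk_stops x n := succ (iter n walk_step x) == None.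

Lemma walk_terminates s : s \in src -> has (walk_stops s) (iota 0 #|V|.+1).
Proof.
move=> sS; apply/negPn/negP => /hasPn none.
have al : walk_alive s #|V|.+1 by move=> i lti; apply: none; rewrite mem_iota.
pose F (i : 'I_#|V|.+1) := iter i walk_step s.
have injF : injective F.
  move=> i j /(walk_iter_inj sS sS) [] => [||_ /val_inj] //; apply: walk_alive_le al;
  exact: ltnW.
by have := leq_card F injF; rewrite card_ord ltnn.
Qed.

Definition walk_len s := find (walk_stops s) (iota 0 #|V|.+1).
Definition walk s := traject walk_step s (walk_len s).+1.

Lemma walk_len_ends s : s \in src -> succ (iter (walk_len s) walk_step s) = None.
Proof.
move=> sS; have hs := walk_terminates sS.
have := nth_find 0 hs; rewrite nth_iota; last by rewrite -[X in _ < X](size_iota 0) -has_find.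
by move/eqP.
Qed.

Lemma walk_len_alive s : s \in src -> walk_alive s (walk_len s).
Proof.
move=> sS i lti; have := before_find 0 lti.
rewrite nth_iota /walk_stops => [->//|].
apply: ltn_trans lti _; rewrite -[X in _ < X](size_iota 0) -has_find.
exact: walk_terminates.
Qed.

Lemma walk_ST s : s \in src -> ST_path E S T (walk s).
Proof.
move=> sS; have al := walk_len_alive sS; have us := linkage_src_used L sS.
rewrite /walk /ST_path trajectS last_traject walk_alive_path // (linkage_src_in L sS).
rewrite (linkage_sink L (walk_alive_used us al (leqnn _)) (walk_len_ends sS)) andbT.
rewrite andbT -trajectS; apply/(uniqP s) => i j; rewrite !inE size_traject => lti ltj.
rewrite !nth_traject // => e; move: lti ltj; rewrite !ltnS => lti ltj.
by case: (walk_iter_inj sS sS (walk_alive_le lti al) (walk_alive_le ltj al) e).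
Qed.

Lemma walk_disjoint s s' : s \in src -> s' \in src -> s != s' ->
  [disjoint walk s & walk s'].
Proof.
move=> sS s'S ne; apply/pred0P => x /=; apply/negbTE/nandP.
case: (boolP (x \in walk s)) => [/trajectP[i lti ->]|] /=; last by left.
right; apply/trajectP => -[j ltj] e.
move: lti ltj; rewrite !ltnS => lti ltj.
have ali := walk_alive_le lti (walk_len_alive sS).
have alj := walk_alive_le ltj (walk_len_alive s'S).
by case: (walk_iter_inj sS s'S ali alj e) => /eqP; rewrite (negbTE ne).
Qed.

Lemma linkage_routable : routable E S T k.
Proof.
exists (map walk src); split.
- by rewrite size_map (linkage_size L).
- by apply/allP => p /mapP[s sS ->]; apply: walk_ST.
rewrite pairwise_map; move: (linkage_uniq L); rewrite uniq_pairwise.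
apply: (sub_in_pairwise (P := mem src)); last exact/allP.
by move=> s s' sS s'S /= ne; apply: walk_disjoint.
Qed.

End LinkageWalks.

Lemma index_infix2 (T : eqType) (p : seq T) x y : uniq p -> infix [:: x; y] p ->
  index y p = (index x p).+1.
Proof.
move=> up /infixP[s1 [s2 ep]]; move: up.
rewrite ep cat_uniq => /and3P[_ /hasPn s1' /= /andP[]].
rewrite inE negb_or => /andP[/negbTE nxy _] _.
rewrite !index_cat (negbTE (s1' x _)) ?(negbTE (s1' y _)) ?inE ?eqxx ?orbT //=.
by rewrite nxy !eqxx addnS.
Qed.

Lemma uniq_pmap_ohead (V : finType) (P : seq (seq V)) :
  pairwise (fun p q : seq V => [disjoint p & q]) P -> uniq (pmap ohead P).
Proof.
elim: P => [//|[|x p] P IHP] /= /andP[disj /IHP ->] //.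
rewrite andbT mem_pmap.
apply/negP => /mapP[[|y q] qP] //= -[eyx]; rewrite -eyx in qP.
have := allP disj _ qP; rewrite disjoint_has => /hasPn/(_ x).
by rewrite !inE eqxx => /(_ isT).
Qed.

Section RoutingArcs.
Variables (V : finType) (E : rel V) (S T : {set V}) (k : nat) (P : seq (seq V)).
Hypothesis hP : routing E S T k P.

Definition route_arc x y := has (infix [:: x; y]) P.
Definition route_succ x := [pick y | route_arc x y].
Definition on_route x := has (fun p : seq V => x \in p) P.
Definition route_sources := pmap ohead P.

Lemma route_ST p : p \in P -> ST_path E S T p.
Proof. by case: hP => _ /allP h _ /h. Qed.

Lemma route_uniq p : p \in P -> uniq p.
Proof. by move/route_ST; case: p => // x p /and4P[]. Qed.

Lemma route_unique p q x : p \in P -> q \in P -> x \in p -> x \in q -> p = q.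
Proof.
case: hP => _ _ /(pairwiseP [::]) disjP pP qP xp xq.
have meet i j : i < j -> j < size P -> x \in nth [::] P i -> x \in nth [::] P j -> False.
  move=> ltij ltjP xi xj; have := disjP i j (ltn_trans ltij ltjP) ltjP ltij.
  by rewrite disjoint_has => /hasPn/(_ x xi); rewrite xj.
move: pP qP xp xq => /(nthP [::])[i ltiP <-] /(nthP [::])[j ltjP <-].
by case: (ltngtP i j) => [ltij|ltji|-> //] xi xj; [case: (meet i j) | case: (meet j i)].
Qed.

Lemma route_arc_index x y : route_arc x y ->
  exists2 p, p \in P & [/\ x \in p, y \in p & index y p = (index x p).+1].
Proof.
case/hasP => p pP xy; exists p => //.
split; last exact: index_infix2 (route_uniq pP) xy.
  by apply: (mem_infix xy); rewrite !inE eqxx.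
by apply: (mem_infix xy); rewrite !inE eqxx orbT.
Qed.

Lemma route_arc_fun x y y' : route_arc x y -> route_arc x y' -> y = y'.
Proof.
move=> /route_arc_index[p pP [xp yp iy]] /route_arc_index[q qP [xq y'q iy']].
have epq := route_unique pP qP xp xq; subst q.
by apply: (index_inj y yp y'q); rewrite iy iy'.
Qed.

Lemma route_arc_inj x x' y : route_arc x y -> route_arc x' y -> x = x'.
Proof.
move=> /route_arc_index[p pP [xp yp iy]] /route_arc_index[q qP [x'q yq iy']].
have epq := route_unique pP qP yp yq; subst q.
by apply: (index_inj x xp x'q); apply: succn_inj; rewrite -iy -iy'.
Qed.

Lemma route_arc_asym x y : route_arc x y -> ~ route_arc y x.
Proof.
move=> /route_arc_index[p pP [xp yp iy]] /route_arc_index[q qP [yq xq ix]].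
have epq := route_unique pP qP xp xq; subst q.
by move: (leqnn (index x p)); rewrite {1}ix iy ltnNge ltnW.
Qed.

Lemma route_arc_edge x y : route_arc x y -> E x y.
Proof.
case/hasP => p pP /infixP[s1 [s2 ep]]; have := route_ST pP.
case: p ep pP => // h p' ep _ /and4P[hp _ _ _].
have : sorted E (s1 ++ [:: x; y] ++ s2) by rewrite -ep.
by rewrite /= sorted_cat_cons => /andP[_ /andP[]].
Qed.

Lemma route_arc_on x y : route_arc x y -> on_route x /\ on_route y.
Proof.
by case/hasP=> p pP xy; split; apply/hasP; exists p => //; apply: (mem_infix xy);
  rewrite !inE eqxx ?orbT.
Qed.

Lemma on_route_succ x : on_route x -> (exists y, route_arc x y) \/ x \in T.
Proof.
case/hasP => p pP xp; have := route_ST pP.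
case/splitPr: xp pP => s1 [|y s2] pP hST; last first.
  by left; exists y; apply/hasP; exists (s1 ++ [:: x, y & s2]) => //; apply: infix_infix.
by right; case: s1 {pP} hST => [|z s1] /and4P[]; rewrite ?last_cat.
Qed.

Lemma route_no_pred x : on_route x -> (forall y, ~ route_arc y x) -> x \in S.
Proof.
case/hasP => p pP xp nopred; have := route_ST pP.
case/splitPr: xp pP => s1 s2 pP; case/lastP: s1 pP => [|s1 z] pP; first by case/and4P.
case: (nopred z); apply/hasP; exists (rcons s1 z ++ x :: s2) => //.
by rewrite -cats1 -catA; apply: infix_infix.
Qed.

Lemma route_succ_arc x y : route_succ x = Some y <-> route_arc x y.
Proof.
rewrite /route_succ; case: pickP => [z xz|none]; split=> [e|xy] //.
- by case: e => <-.
- by rewrite (route_arc_fun xz xy).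
- by move: (none y); rewrite xy.
Qed.

Lemma route_source_head s y : s \in route_sources -> ~ route_arc y s.
Proof.
rewrite mem_pmap => /mapP[[|z p] pP] //= -[->] /route_arc_index[q qP [yq zq iq]].
have epq := route_unique qP pP zq (mem_head z p); subst q.
by move: iq; rewrite /= eqxx.
Qed.

Lemma route_sources_size : size route_sources = k.
Proof.
case: hP => <- _ _; rewrite size_pmap -[RHS]count_predT; apply: eq_in_count => p pP.
by have := route_ST pP; case: p {pP}.
Qed.

Lemma route_sources_in s : s \in route_sources -> s \in S /\ on_route s.
Proof.
rewrite mem_pmap => /mapP[[|z p] pP] //= -[->]; split.
  by case/and4P: (route_ST pP).
by apply/hasP; exists (z :: p); rewrite ?mem_head.
Qed.

Lemma routing_linkage : linkage E S T k route_succ on_route route_sources.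
Proof.
split.
- by case: hP => _ _ /uniq_pmap_ohead.
- exact: route_sources_size.
- by move=> s /route_sources_in[].
- by move=> s /route_sources_in[].
- by move=> s x sP _ /route_succ_arc; apply: route_source_head.
- by move=> x y _ /route_succ_arc /route_arc_on[].
- by move=> x y _ /route_succ_arc /route_arc_edge.
- move=> x xP none; case: (on_route_succ xP) => // -[y /route_succ_arc].
  by rewrite none.
- by move=> x x' y _ _ /route_succ_arc xy /route_succ_arc; apply: route_arc_inj.
Qed.

End RoutingArcs.

Section ContractLinkage.
Variables (V : finType) (E : rel V) (S T : {set V}) (k : nat)
  (succ : V -> option V) (used : pred V) (src : seq V).
Hypotheses (Esym : symmetric E) (Eirr : irreflexive E).
Hypothesis L : linkage E S T k succ used src.
Variables (a b : V).
Hypotheses (Eab : E a b) (bS : b \notin S) (bT : b \notin T) (ua : used a) (ub : used b).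
Hypothesis succ_ab : succ a = Some b \/ succ b = Some a.
Hypothesis succ_ab_asym : ~ (succ a = Some b /\ succ b = Some a).

Lemma ab_neq : a != b.
Proof. by apply: contraTneq Eab => ->; rewrite Eirr. Qed.

Definition first_ab := if succ a == Some b then a else b.
Definition second_ab := if succ a == Some b then b else a.

Lemma first_second_ab : (first_ab = a /\ second_ab = b) \/ (first_ab = b /\ second_ab = a).
Proof. by rewrite /first_ab /second_ab; case: ifP; [left | right]. Qed.

Lemma succ_first_ab : succ first_ab = Some second_ab.
Proof. by rewrite /first_ab /second_ab; case: eqP => // nab; case: succ_ab. Qed.

Lemma succ_second_ab : succ second_ab <> Some first_ab.
Proof.
by rewrite /first_ab /second_ab; case: eqP => [sab sba|//]; apply: succ_ab_asym.
Qed.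

Definition merge_ab (x : V) : cvert b := insubd (exist _ a ab_neq : cvert b) x.

(* The contracted vertex [w] inherits the successor of [rep_ab w]; for the
   merged vertex this is the later of [a] and [b] along the linkage. *)
Definition rep_ab (w : cvert b) : V := if val w == a then second_ab else val w.

Lemma val_merge_ab x : val (merge_ab x) = if x == b then a else x.
Proof. by rewrite /merge_ab val_insubd; case: eqP. Qed.

Lemma merge_rep_ab w : merge_ab (rep_ab w) = w.
Proof.
apply: val_inj; rewrite /rep_ab; case: (val w =P a) => [->|_]; rewrite val_merge_ab.
  by case: first_second_ab => -[_ ->]; rewrite ?eqxx // (negbTE ab_neq).
by rewrite (negbTE (valP w)).
Qed.

Lemma rep_ab_inj : injective rep_ab.
Proof. exact: can_inj merge_rep_ab. Qed.

Lemma rep_ab_neq_first w : rep_ab w != first_ab.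
Proof.
have wb : val w != b := valP w; have ab := ab_neq.
rewrite /rep_ab; case: (val w =P a) => [_|/eqP wa];
  by case: first_second_ab => -[fa sa]; rewrite ?fa ?sa // eq_sym.
Qed.

Lemma rep_ab_cases w : rep_ab w = val w \/ rep_ab w = b.
Proof.
rewrite /rep_ab; case: (val w =P a) => [->|]; last by left.
by case: first_second_ab => -[_ ->]; [right | left].
Qed.

Lemma used_rep_ab w : used (val w) -> used (rep_ab w).
Proof. by case: (rep_ab_cases w) => ->. Qed.

Lemma merge_ab_eq x y : merge_ab x = merge_ab y ->
  x = y \/ (x \in [:: a; b] /\ y \in [:: a; b]).
Proof.
move/(congr1 val); rewrite !val_merge_ab.
case: (x =P b) => [->|_]; case: (y =P b) => [->|_] e; [left|right|right|left] => //.
  by rewrite -e !inE !eqxx orbT.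
by rewrite e !inE !eqxx orbT.
Qed.

Lemma ab_first_second z : z \in [:: a; b] -> z = first_ab \/ z = second_ab.
Proof.
by rewrite !inE => /orP[] /eqP ->; case: first_second_ab => -[-> ->]; auto.
Qed.

Lemma second_ab_not_src : second_ab \notin src.
Proof.
apply/negP => ssrc; apply: (linkage_src_head L ssrc _ succ_first_ab).
by case: first_second_ab => -[-> _].
Qed.

Lemma succ_rep_ab_first w z : used (val w) -> succ (rep_ab w) = Some z ->
  z \in [:: a; b] -> z = first_ab.
Proof.
move=> uw sz /ab_first_second[//|zs].
have ufirst : used first_ab by case: first_second_ab => -[-> _].
have := linkage_succ_inj L (used_rep_ab uw) ufirst sz; rewrite zs => /(_ succ_first_ab) /eqP.
by rewrite (negbTE (rep_ab_neq_first w)).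
Qed.

Lemma contr_edge_merge x y : E x y -> merge_ab x != merge_ab y ->
  contr_edge E a (merge_ab x) (merge_ab y).
Proof.
rewrite /contr_edge -val_eqE !val_merge_ab => Exy ->.
case: (x =P b) Exy => [->|_] Exy; case: (y =P b) Exy => [->|_] Exy /=.
- by rewrite Eirr in Exy.
- by rewrite eqxx Exy orbT.
- by rewrite eqxx (Esym b x) Exy !orbT.
- by rewrite Exy.
Qed.

Definition contr_succ (w : cvert b) := omap merge_ab (succ (rep_ab w)).
Definition contr_used : pred (cvert b) := [pred w | used (val w)].

Lemma contr_succ_some w z : contr_succ w = Some z ->
  exists2 y, succ (rep_ab w) = Some y & z = merge_ab y.
Proof. by rewrite /contr_succ; case: (succ _) => //= y [<-]; exists y. Qed.

Lemma val_merge_src s : s \in src -> val (merge_ab s) = s.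
Proof.
move=> ss; rewrite val_merge_ab; case: eqP => // sb.
by move: bS; rewrite -sb (linkage_src_in L ss).
Qed.

Lemma merge_succ_neq w y : used (val w) -> succ (rep_ab w) = Some y -> merge_ab y != w.
Proof.
move=> uw sy; apply/eqP; rewrite -{1}(merge_rep_ab w) => /merge_ab_eq.
have Ey := linkage_succ_edge L (used_rep_ab uw) sy.
case=> [eyr|[ya ra]]; first by rewrite eyr Eirr in Ey.
case: (ab_first_second ra) => [rf|rs]; first by move: (rep_ab_neq_first w); rewrite rf eqxx.
case: (ab_first_second ya) => [yf|ys]; first by apply: succ_second_ab; rewrite -rs -yf.
by rewrite ys -rs Eirr in Ey.
Qed.

Lemma contract_linkage : linkage (@contr_edge V E a b)
  [set w | val w \in S] [set w | val w \in T] k contr_succ contr_used (map merge_ab src).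
Proof.
have urep w := @used_rep_ab w.
split.
- rewrite map_inj_in_uniq ?(linkage_uniq L) // => s s' ss ss' /(congr1 val).
  by rewrite !val_merge_src.
- by rewrite size_map (linkage_size L).
- by move=> _ /mapP[s ss ->]; rewrite inE val_merge_src // (linkage_src_in L ss).
- by move=> _ /mapP[s ss ->]; rewrite inE /= val_merge_src //; apply: (linkage_src_used L ss).
- move=> _ w /mapP[s ss ->] uw /contr_succ_some[y sy /merge_ab_eq[esy|[sa ya]]].
    by apply: (linkage_src_head L ss (urep _ uw)); rewrite sy esy.
  have yf := succ_rep_ab_first uw sy ya.
  case: (ab_first_second sa) => [sf|ss2]; last by move: second_ab_not_src; rewrite -ss2 ss.
  by apply: (linkage_src_head L ss (urep _ uw)); rewrite sy yf sf.
- move=> w _ uw /contr_succ_some[y sy ->]; rewrite /contr_used /= val_merge_ab.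
  by case: eqP => // _; apply: (linkage_succ_used L (urep _ uw) sy).
- move=> w _ uw /contr_succ_some[y sy ->]; rewrite -{1}(merge_rep_ab w).
  apply: contr_edge_merge; first exact: (linkage_succ_edge L (urep _ uw) sy).
  by rewrite merge_rep_ab eq_sym merge_succ_neq.
- move=> w uw; rewrite /contr_succ inE; case e: (succ _) => //= _.
  have := linkage_sink L (urep _ uw) e.
  by case: (rep_ab_cases w) => -> //; rewrite (negbTE bT).
- move=> w w' _ uw uw' /contr_succ_some[y sy ->] /contr_succ_some[y' sy' e].
  apply: rep_ab_inj; apply: (linkage_succ_inj L (urep _ uw) (urep _ uw') sy); rewrite sy'.
  case: (merge_ab_eq e) => [-> //|[ya y'a]].
  by rewrite (succ_rep_ab_first uw sy ya) (succ_rep_ab_first uw' sy' y'a).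
Qed.

End ContractLinkage.

Section AlternatingCycles.
Variables (V : finType) (M Sg : seq (seq V)).
Implicit Types (e : V * V * bool) (cyc : seq (V * V * bool)).

Definition arcs_linked : rel (V * V * bool) := fun e e' => e.1.2 == e'.1.1.
Definition arcs_not_both_single : rel (V * V * bool) := fun e e' => e.2 || e'.2.

Definition alt_segments (ss : seq (seq (V * V * bool))) := forall i, i < size ss ->
  let s := nth [::] ss i in
  if odd i then (size s == 1) && all (fun e => ~~ e.2) s
  else (s != [::]) && all (fun e => e.2) s.

Lemma path_arcs_linked e cyc e' :
  map (fun e => e.1.2) (e :: cyc) = rcons (map (fun e => e.1.1) cyc) e'.1.1 ->
  path arcs_linked e (rcons cyc e').
Proof.
elim: cyc e => [|e1 cyc IHcyc] e /=.
  by case=> tgt; rewrite /arcs_linked tgt eqxx.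
by case=> tgt /IHcyc ->; rewrite /arcs_linked tgt eqxx.
Qed.

Lemma path_main e cyc : all (fun e => e.2) (e :: cyc) -> path arcs_not_both_single e cyc.
Proof.
elim: cyc e => [//|e1 cyc IHcyc] e /= /and3P[me me1 mcyc].
by rewrite /arcs_not_both_single me IHcyc //= me1.
Qed.

Lemma alt_segments_flatten r ss : size ss = 2 * r -> alt_segments ss ->
  flatten ss = [::] \/
  exists e cyc, [/\ flatten ss = e :: cyc, e.2 & path arcs_not_both_single e cyc].
Proof.
elim: r ss => [|r IHr] [|s0 [|s1 ss]] //=; rewrite ?muln0 ?mulnS //; try by left.
move=> [sz] alt; have /= al0 := alt 0 isT; have /= al1 := alt 1 isT.
have alt' : alt_segments ss by move=> i; have := alt i.+2; rewrite /= !ltnS negbK.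
case: s1 {alt} al1 => [|e1 [|]] //=; rewrite andbT => se1.
case: s0 al0 => [|e0 s0] //= /andP[me0 ms0].
right; exists e0, (s0 ++ e1 :: flatten ss); split=> //.
rewrite cat_path path_main /=; last by rewrite me0.
have ml : (last e0 s0).2.
  by have := mem_last e0 s0; rewrite inE => /orP[/eqP->|/(allP ms0)].
rewrite {1}/arcs_not_both_single ml.
case: (IHr ss sz alt') => [->|[e [cyc [-> me pe]]]] //=.
by rewrite /arcs_not_both_single me orbT.
Qed.

Definition alt_arc_cycle (L : seq (V * V * bool)) : Prop :=
  [/\ uniq (map (fun e => e.1.1) L), all (arc_in M Sg) L,
      {in L, forall e, (next L e).1.1 = e.1.2},
      {in L, forall e, e.2 || (next L e).2} &
      exists u v, (u, v, false) \in L].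

Lemma alt_cycle_arcs : alt_cycle M Sg -> exists L, alt_arc_cycle L.
Proof.
case=> cyc [ne arcs tgts usrc [n [ss [r [r_gt0 sz cyc_ss alt]]]]].
have linked : cycle arcs_linked (rot n cyc).
  rewrite rot_cycle; case: cyc ne tgts {arcs usrc cyc_ss} => // e cyc _ tgts.
  by apply: path_arcs_linked; rewrite tgts /rot /= drop0 take0 cats1.
have not_both : cycle arcs_not_both_single (rot n cyc).
  rewrite cyc_ss; case: (alt_segments_flatten sz alt) => [->|[e [s [-> me pe]]]] //=.
  by rewrite rcons_path pe /arcs_not_both_single me orbT.
exists (rot n cyc); split.
- by rewrite map_rot rot_uniq.
- by apply/allP => e; rewrite mem_rot => /(allP arcs).
- by move=> e eL; apply/esym/eqP; apply: next_cycle linked eL.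
- by move=> e eL; apply: next_cycle not_both eL.
have lt1 : 1 < size ss by rewrite sz; case: r r_gt0 {sz alt} => // r' _; rewrite mulnS.
have := alt 1 lt1; rewrite /=; case e1: (nth [::] ss 1) => [|[[u v] c] [|]] //=.
rewrite andbT => /negbTE c_single; exists u, v; rewrite -c_single cyc_ss.
by apply/flattenP; exists [:: (u, v, c)]; rewrite ?inE // -e1 mem_nth.
Qed.

End AlternatingCycles.

Lemma uniq_map_inj_in (T1 T2 : eqType) (f : T1 -> T2) (s : seq T1) :
  uniq (map f s) -> {in s &, injective f}.
Proof.
elim: s => [//|x s IHs] /= /andP[fx_s us] y z; rewrite !inE.
case/orP=> [/eqP->|ys]; case/orP=> [/eqP->|zs] // e.
- by move: fx_s; rewrite e map_f.
- by move: fx_s; rewrite -e map_f.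
- exact: IHs.
Qed.

Section Rerouting.
Variables (V : finType) (E : rel V) (Sa Ta Sb Tb : {set V}) (k : nat) (M Sg : seq (seq V)).
Hypotheses (Esym : symmetric E) (hM : routing E Sa Ta k M) (hSg : routing E Sb Tb k Sg).
Variable L : seq (V * V * bool).
Hypotheses (usrc : uniq (map (fun e => e.1.1) L)) (arcsL : all (arc_in M Sg) L)
  (linked : {in L, forall e, (next L e).1.1 = e.1.2})
  (not_both : {in L, forall e, e.2 || (next L e).2}).

Lemma arcs_uniq : uniq L.
Proof. exact: map_uniq usrc. Qed.

Lemma arc_src_inj e e' : e \in L -> e' \in L -> e.1.1 = e'.1.1 -> e = e'.
Proof. by move=> eL e'L; apply: (uniq_map_inj_in usrc eL e'L). Qed.

Lemma arc_tgt_inj e e' : e \in L -> e' \in L -> e.1.2 = e'.1.2 -> e = e'.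
Proof.
move=> eL e'L e12; have : next L e = next L e'.
  by apply: arc_src_inj; rewrite ?mem_next // !linked.
by move/(congr1 (prev L)); rewrite !(prev_next arcs_uniq).
Qed.

Lemma prev_arc e : e \in L ->
  [/\ prev L e \in L, (prev L e).1.2 = e.1.1 & (prev L e).2 || e.2].
Proof.
move=> eL; have pL : prev L e \in L by rewrite mem_prev.
by have := linked pL; have := not_both pL; rewrite (next_prev arcs_uniq).
Qed.

Lemma single_arc_in u v : (u, v, false) \in L -> exists p, (p, u, true) \in L.
Proof.
by case/prev_arc; case: (prev L _) => [[p u'] []] //= pL <-; exists p.
Qed.

Lemma single_arc_out u v : (u, v, false) \in L -> exists w, (v, w, true) \in L.
Proof.
move=> eL; have := linked eL; have := not_both eL; have := mem_next L (u, v, false).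
by rewrite eL; case: (next L _) => [[v' w] []] //= nL _ <-; exists w.
Qed.

Lemma main_arc x y : (x, y, true) \in L -> route_arc M x y.
Proof. by move/(allP arcsL). Qed.

Lemma single_arc x y : (x, y, false) \in L -> route_arc Sg x y.
Proof. by move/(allP arcsL). Qed.

(* The M-paths are rerouted along the cycle: on reaching the head [v] of a
   single arc [(u, v)] of [L] they walk_step back to [u], so that the vertices strictly
   inside the M-segments of [L] are no longer used. *)
Definition single_pred x := [pick u | (u, x, false) \in L].
Definition cycle_inner x :=
  [exists p, (p, x, true) \in L] && [exists q, (x, q, true) \in L].
Definition reroute_succ x := if single_pred x is Some u then Some u else route_succ M x.
Definition reroute_used x := on_route M x && ~~ cycle_inner x.

Lemma single_pred_arc x u : (u, x, false) \in L -> single_pred x = Some u.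
Proof.
move=> uxL; rewrite /single_pred; case: pickP => [u' u'xL|none].
  by have [->] := arc_tgt_inj u'xL uxL erefl.
by move: (none u); rewrite uxL.
Qed.

Lemma single_predP x u : single_pred x = Some u -> (u, x, false) \in L.
Proof. by rewrite /single_pred; case: pickP => // u' u'xL [<-]. Qed.

Lemma single_pred_none x : single_pred x = None -> forall u, (u, x, false) \notin L.
Proof. by move=> none u; apply/negP => /single_pred_arc; rewrite none. Qed.

Lemma used_main_out x : reroute_used x -> single_pred x = None ->
  forall y, (x, y, true) \notin L.
Proof.
case/andP=> _ /negP inner none y; apply/negP => xyL; have [pL tgt _] := prev_arc xyL.
move: pL tgt; case: (prev L _) => [[p x'] [|]] pL /= ex'; subst x'.
  by apply: inner; apply/andP; split; apply/existsP; [exists p | exists y].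
by move: (single_pred_none none p); rewrite pL.
Qed.

Lemma used_main_into p x y : (p, y, true) \in L -> reroute_used x ->
  single_pred x = None -> ~ route_arc M x y.
Proof.
move=> pyL ux none xy; have px := route_arc_inj hM (main_arc pyL) xy; subst p.
by move: (used_main_out ux none y); rewrite pyL.
Qed.

Lemma reroute_src_used s : s \in route_sources M -> reroute_used s.
Proof.
move=> sM; rewrite /reroute_used (route_sources_in hM sM).2 /=.
by apply/negP => /andP[/existsP[p /main_arc psM] _]; apply: (route_source_head hM sM psM).
Qed.

Lemma reroute_src_head s x : s \in route_sources M -> reroute_succ x <> Some s.
Proof.
move=> sM; rewrite /reroute_succ.
case e: (single_pred x) => [u|] => [[us]|/(route_succ_arc hM)].
  have [p psL] := single_arc_in (single_predP e); rewrite us in psL.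
  exact: (route_source_head hM sM (main_arc psL)).
by move=> xs; apply: (route_source_head hM sM xs).
Qed.

Lemma reroute_succ_used x y : reroute_used x -> reroute_succ x = Some y ->
  reroute_used y /\ E x y.
Proof.
move=> ux; rewrite /reroute_succ.
case e: (single_pred x) => [u|] => [[<-]|/(route_succ_arc hM) xy].
  have uxL := single_predP e; have [p puL] := single_arc_in uxL.
  split; last by rewrite Esym; apply: (route_arc_edge hSg (single_arc uxL)).
  rewrite /reroute_used (route_arc_on (main_arc puL)).2 /=.
  by apply/negP => /andP[_ /existsP[q /arc_src_inj/(_ uxL erefl)]].
split; last exact: (route_arc_edge hM xy).
rewrite /reroute_used (route_arc_on xy).2 /=.
apply/negP => /andP[/existsP[p pyL] _].
exact: (used_main_into pyL ux e).
Qed.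

Lemma reroute_succ_inj x x' y : reroute_used x -> reroute_used x' ->
  reroute_succ x = Some y -> reroute_succ x' = Some y -> x = x'.
Proof.
move=> ux ux'; rewrite /reroute_succ.
case e: (single_pred x) => [u|]; case e': (single_pred x') => [u'|].
- move=> [uy] [u'y]; subst u u'.
  by have [] := arc_src_inj (single_predP e) (single_predP e') erefl.
- move=> [uy] /(route_succ_arc hM) x'u; subst u.
  have [p puL] := single_arc_in (single_predP e).
  by case: (used_main_into puL ux' e' x'u).
- move=> /(route_succ_arc hM) xu' [u'y]; subst u'.
  have [p puL] := single_arc_in (single_predP e').
  by case: (used_main_into puL ux e xu').
- by move=> /(route_succ_arc hM) xy /(route_succ_arc hM); apply: (route_arc_inj hM xy).
Qed.

Lemma reroute_linkage : linkage E Sa Ta k reroute_succ reroute_used (route_sources M).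
Proof.
have L0 := routing_linkage hM; split.
- exact: (linkage_uniq L0).
- exact: (linkage_size L0).
- exact: (linkage_src_in L0).
- by move=> s /reroute_src_used.
- by move=> s x sM _; apply: reroute_src_head.
- by move=> x y ux /(reroute_succ_used ux)[].
- by move=> x y ux /(reroute_succ_used ux)[].
- move=> x /andP[ox _]; rewrite /reroute_succ; case: (single_pred x) => // none.
  exact: (linkage_sink L0 ox none).
- exact: reroute_succ_inj.
Qed.

Lemma reroute_single_head u v : (u, v, false) \in L ->
  reroute_succ v = Some u /\ reroute_used v.
Proof.
move=> uvL; rewrite /reroute_succ (single_pred_arc uvL); split => //.
have [w vwL] := single_arc_out uvL.
rewrite /reroute_used (route_arc_on (main_arc vwL)).1 /=.
by apply/negP => /andP[/existsP[p /arc_tgt_inj/(_ uvL erefl)]].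
Qed.

Lemma reroute_single_tail u v : (u, v, false) \in L ->
  reroute_succ u = route_succ M u /\ reroute_used u.
Proof.
move=> uvL; have [p puL] := single_arc_in uvL; rewrite /reroute_succ.
have -> : single_pred u = None.
  by rewrite /single_pred; case: pickP => // u' /arc_tgt_inj/(_ puL erefl).
split=> //; rewrite /reroute_used (route_arc_on (main_arc puL)).2 /=.
by apply/negP => /andP[_ /existsP[q /arc_src_inj/(_ uvL erefl)]].
Qed.

End Rerouting.

Section DegreeOne.
Variables (V : finType) (E : rel V) (S T : {set V}) (k : nat) (P : seq (seq V)).
Hypotheses (Esym : symmetric E) (hP : routing E S T k P).
Variable x : V.
Hypothesis x_deg1 : forall y z, E x y -> E x z -> y = z.

Lemma deg1_route_end y : route_arc P y x -> x \in T.
Proof.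
move=> yx; case: (on_route_succ hP (route_arc_on yx).2) => // -[z xz].
have Exy : E x y by rewrite Esym; apply: (route_arc_edge hP yx).
rewrite -(x_deg1 (route_arc_edge hP xz) Exy) in yx.
by case: (route_arc_asym hP yx xz).
Qed.

Lemma deg1_route_start y : route_arc P x y -> x \in S.
Proof.
move=> xy; apply: (route_no_pred hP (route_arc_on xy).1) => z zx.
have Exz : E x z by rewrite Esym; apply: (route_arc_edge hP zx).
rewrite (x_deg1 Exz (route_arc_edge hP xy)) in zx.
exact: (route_arc_asym hP xy zx).
Qed.

End DegreeOne.

Lemma contract_route_arc (V : finType) (E : rel V) (S T : {set V}) k P a b :
  symmetric E -> irreflexive E -> routing E S T k P -> route_arc P a b ->
  b \notin S -> b \notin T ->
  routable (@contr_edge V E a b) [set w | val w \in S] [set w | val w \in T] k.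
Proof.
move=> Esym Eirr hP ab bS bT; have [ua ub] := route_arc_on ab.
apply: linkage_routable; apply: (contract_linkage Esym Eirr (routing_linkage hP)) => //.
- exact: (route_arc_edge hP ab).
- by left; apply/(route_succ_arc hP).
- by case=> _ /(route_succ_arc hP); apply: (route_arc_asym hP ab).
Qed.

Section NoAlternatingCycle.
Variables (V : finType) (E : rel V) (Sa Ta Sb Tb : {set V}) (k : nat) (M Sg : seq (seq V)).
Hypotheses (Esym : symmetric E) (Eirr : irreflexive E).
Hypotheses (hM : routing E Sa Ta k M) (hSg : routing E Sb Tb k Sg).
Hypotheses (SbTa : [disjoint Sb & Ta]) (SaTb : [disjoint Sa & Tb]).
Hypothesis terminal_deg1 : forall x y z, x \in Sa :|: Ta :|: Sb :|: Tb ->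
  E x y -> E x z -> y = z.
Hypothesis contraction_breaks : forall a b, E a b ->
  a \notin Sa :|: Ta :|: Sb :|: Tb -> b \notin Sa :|: Ta :|: Sb :|: Tb ->
  routable (@contr_edge V E a b) [set w | val w \in Sa] [set w | val w \in Ta] k ->
  routable (@contr_edge V E a b) [set w | val w \in Sb] [set w | val w \in Tb] k -> False.

Lemma single_tail_nonterminal p u v : route_arc M p u -> route_arc Sg u v ->
  u \notin Sa :|: Ta :|: Sb :|: Tb.
Proof.
move=> pu uv; apply/negP => /terminal_deg1 deg1.
have Eup : E u p by rewrite Esym; apply: (route_arc_edge hM pu).
rewrite (deg1 _ _ Eup (route_arc_edge hSg uv)) in pu.
have uTa := deg1_route_end Esym hM deg1 pu.
by move: (disjointFr SbTa (deg1_route_start Esym hSg deg1 uv)); rewrite uTa.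
Qed.

Lemma single_head_nonterminal u v w : route_arc Sg u v -> route_arc M v w ->
  v \notin Sa :|: Ta :|: Sb :|: Tb.
Proof.
move=> uv vw; apply/negP => /terminal_deg1 deg1.
have Evu : E v u by rewrite Esym; apply: (route_arc_edge hSg uv).
have wu := deg1 _ _ (route_arc_edge hM vw) Evu; rewrite wu in vw.
have vSa := deg1_route_start Esym hM deg1 vw.
by move: (disjointFr SaTb vSa); rewrite (deg1_route_end Esym hSg deg1 uv).
Qed.

Theorem no_alt_cycle : ~ alt_cycle M Sg.
Proof.
case/alt_cycle_arcs => L [usrc arcsL linked not_both [u [v uvL]]].
have [p puL] := single_arc_in usrc linked not_both uvL.
have [w vwL] := single_arc_out linked not_both uvL.
have uv := single_arc arcsL uvL.
have uT := single_tail_nonterminal (main_arc arcsL puL) uv.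
have vT := single_head_nonterminal uv (main_arc arcsL vwL).
move: (vT); rewrite !in_setU !negb_or => /andP[/andP[/andP[vSa vTa] vSb] vTb].
apply: (contraction_breaks (route_arc_edge hSg uv) uT vT); last first.
  exact: (contract_route_arc Esym Eirr hSg uv).
case: (route_succ M u =P Some v) => [/(route_succ_arc hM) uvM|nuvM].
  exact: (contract_route_arc Esym Eirr hM uvM).
have [sv uv'] := reroute_single_head usrc arcsL linked not_both uvL.
have [su uu] := reroute_single_tail usrc arcsL linked not_both uvL.
apply: linkage_routable.
apply: (contract_linkage Esym Eirr (reroute_linkage Esym hM hSg usrc arcsL linked not_both))
  => //; [exact: (route_arc_edge hSg uv) | by right | by rewrite su; case].
Qed.

End NoAlternatingCycle.

Lemma disjoint_setUl (T : finType) (A B C : {set T}) :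
  [disjoint A :|: B & C] = [disjoint A & C] && [disjoint B & C].
Proof. by rewrite -!setI_eq0 setIUl setU_eq0. Qed.

Lemma connect_in_sub (V : finType) (E : rel V) (A B : {set V}) u v : A \subset B ->
  connect [rel x y | [&& E x y, x \in A & y \in A]] u v ->
  connect [rel x y | [&& E x y, x \in B & y \in B]] u v.
Proof.
move=> AB; apply: connect_sub => x y /and3P[Exy xA yA].
by apply: connect1; rewrite /= Exy !(subsetP AB).
Qed.

Lemma connected_in_setU (V : finType) (E : rel V) (A B : {set V}) u v :
  symmetric E -> connected_in E A -> connected_in E B -> u \in A -> v \in B -> E u v ->
  connected_in E (A :|: B).
Proof.
move=> Esym cA cB uA vB Euv.
have cA' x y (xA : x \in A) (yA : y \in A) := connect_in_sub (subsetUl A B) (cA x y xA yA).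
have cB' x y (xB : x \in B) (yB : y \in B) := connect_in_sub (subsetUr A B) (cB x y xB yB).
have uAB : u \in A :|: B by rewrite inE uA.
have vAB : v \in A :|: B by rewrite inE vB orbT.
move=> x y; rewrite !inE => /orP[xA|xB] /orP[yA|yB]; [exact: cA'| | |exact: cB'].
- apply: connect_trans (cA' _ _ xA uA) (connect_trans _ (cB' _ _ vB yB)).
  by apply: connect1; rewrite /= Euv uAB vAB.
- apply: connect_trans (cB' _ _ xB vB) (connect_trans _ (cA' _ _ uA yA)).
  by apply: connect1; rewrite /= Esym Euv uAB vAB.
Qed.

Section ContractMinor.
Variables (VG VH : finType) (EG : rel VG) (EH : rel VH) (phi : VH -> {set VG}).
Hypotheses (EGsym : symmetric EG) (model : minor_model EG EH phi).
Variables (a b : VH).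
Hypothesis EHab : EH a b.

Lemma contr_model_sub (w : cvert b) : phi (val w) \subset contr_model phi a w.
Proof. by rewrite /contr_model; case: eqP => [->|//]; apply: subsetUl. Qed.

Lemma contr_model_merged (w : cvert b) : val w = a -> phi b \subset contr_model phi a w.
Proof. by rewrite /contr_model => ->; rewrite eqxx subsetUr. Qed.

Lemma model_edge_sub h h' (A B : {set VG}) : EH h h' -> phi h \subset A -> phi h' \subset B ->
  exists u v, [/\ u \in A, v \in B & EG u v].
Proof.
case: model => _ _ _ edges /edges[u [v [uh vh' Euv]]] /subsetP hA /subsetP h'B.
by exists u, v; split; [apply: hA | apply: h'B |].
Qed.

Lemma contr_minor_model : minor_model EG (@contr_edge VH EH a b) (@contr_model VG VH phi a b).
Proof.
have [nonempty conn disj edges] := model.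
split.
- move=> w; apply: contraNneq (nonempty (val w)) => e.
  by rewrite -subset0 -e contr_model_sub.
- move=> w; rewrite /contr_model; case: eqP => // _.
  have [u [v [ua vb Euv]]] := edges a b EHab.
  exact: connected_in_setU EGsym (conn a) (conn b) ua vb Euv.
- move=> w w' ww'; have vww' : val w != val w' by rewrite val_eqE.
  have merged_disj h : h != a -> h != b -> [disjoint phi a :|: phi b & phi h].
    by move=> ha hb; rewrite disjoint_setUl !disj // eq_sym.
  rewrite /contr_model; case: eqP => [wa|/eqP wa]; case: eqP => [w'a|/eqP w'a].
  + by move: vww'; rewrite wa w'a eqxx.
  + exact: merged_disj w'a (valP w').
  + by rewrite disjoint_sym; apply: merged_disj wa (valP w).
  + exact: disj.
- move=> w z /andP[_ /or3P[e|/andP[/eqP wa e]|/andP[/eqP za e]]].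
  + exact: model_edge_sub e (contr_model_sub w) (contr_model_sub z).
  + exact: model_edge_sub e (contr_model_merged wa) (contr_model_sub z).
  + have [u [v [uz vw Euv]]] := model_edge_sub e (contr_model_merged za) (contr_model_sub w).
    by exists v, u; rewrite EGsym.
Qed.

End ContractMinor.

Section TerminalLift.
Variables (VG VH : finType) (phi : VH -> {set VG}).

Lemma tliftP (X : {set VG}) h :
  reflect (exists2 x, x \in X & phi h = [set x]) (h \in tlift phi X).
Proof.
rewrite inE; apply: (iffP existsP) => [[x /andP[xX /eqP]]|[x xX e]]; first by exists x.
by exists x; rewrite xX e eqxx.
Qed.

Lemma tlift_setU (X Y : {set VG}) : tlift phi (X :|: Y) = tlift phi X :|: tlift phi Y.
Proof.
apply/setP => h; rewrite [RHS]inE.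
apply/tliftP/orP => [[x]|[|]/tliftP[x xZ ex]]; last 2 first.
- by exists x; rewrite // inE xZ.
- by exists x; rewrite // inE xZ orbT.
by rewrite inE => /orP[] xZ ex; [left | right]; apply/tliftP; exists x.
Qed.

Lemma tlift_disjoint (X Y : {set VG}) :
  [disjoint X & Y] -> [disjoint tlift phi X & tlift phi Y].
Proof.
move=> XY; rewrite -setI_eq0 -subset0; apply/subsetP => h.
rewrite inE => /andP[/tliftP[x xX ex] /tliftP[y yY ey]].
have exy : x = y by apply: set1_inj; rewrite -ex -ey.
by move: (disjointFr XY xX); rewrite exy yY.
Qed.

Lemma tlift_deg1 (EG : rel VG) (EH : rel VH) (X : {set VG}) :
  minor_model EG EH phi -> (forall x, x \in X -> degree EG x = 1) ->
  forall h y z, h \in tlift phi X -> EH h y -> EH h z -> y = z.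
Proof.
case=> _ _ disj edges deg h y z /tliftP[x xX ex].
move=> /edges[u [v [uh vy Euv]]] /edges[u' [v' [u'h v'z Eu'v']]].
move: uh u'h; rewrite ex !inE => /eqP eu /eqP eu'; subst u u'.
have /eqP/cards1P[t et] := deg x xX.
have nbr w : EG x w -> w = t by move=> Exw; apply/set1P; rewrite -et inE.
rewrite (nbr v Euv) in vy; rewrite (nbr v' Eu'v') in v'z.
by apply/eqP/negP => /negP/disj/disjointFr/(_ vy); rewrite v'z.
Qed.

End TerminalLift.

Lemma tlift_contr (VG VH : finType) (phi : VH -> {set VG}) a b (X : {set VG}) :
  a \notin tlift phi X ->
  {subset [set w : cvert b | val w \in tlift phi X] <= tlift (@contr_model VG VH phi a b) X}.
Proof.
move=> aX w; rewrite inE => /tliftP[x xX ex]; apply/tliftP; exists x => //.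
rewrite /contr_model; case: eqP => // wa.
by case/negP: aX; rewrite -wa; apply/tliftP; exists x.
Qed.

Lemma routable_sub (V : finType) (E : rel V) (S T S' T' : {set V}) k :
  {subset S <= S'} -> {subset T <= T'} -> routable E S T k -> routable E S' T' k.
Proof.
move=> SS' TT' [P [size_P STP disjP]]; exists P; split => //.
apply/allP => p /(allP STP); case: p => // x p /and4P[px up xS lT].
by rewrite /ST_path px up SS' // TT'.
Qed.

Section ContractGoodMinor.
Variables (VG VH : finType) (EG : rel VG) (EH : rel VH) (phi : VH -> {set VG}).
Variables (S1 T1 S2 T2 : {set VG}) (k : nat).
Hypotheses (EGsym : symmetric EG) (model : minor_model EG EH phi)
  (terms : terminals_ok S1 T1 S2 T2 phi).
Variables (a b : VH).
Hypothesis EHab : EH a b.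
Hypotheses (aT : a \notin tlift phi S1 :|: tlift phi T1 :|: tlift phi S2 :|: tlift phi T2)
  (bT : b \notin tlift phi S1 :|: tlift phi T1 :|: tlift phi S2 :|: tlift phi T2).

Lemma contr_terminals_ok : terminals_ok S1 T1 S2 T2 (@contr_model VG VH phi a b).
Proof.
move=> x xT; have [h eh] := terms xT.
have hT : h \in tlift phi S1 :|: tlift phi T1 :|: tlift phi S2 :|: tlift phi T2.
  by rewrite -!tlift_setU; apply/tliftP; exists x.
have hb : h != b by apply: contraNneq bT => <-.
exists (exist _ h hb); rewrite /contr_model /=; case: eqP => // ha.
by case/negP: aT; rewrite -ha.
Qed.

Lemma contr_good_minor :
  routable (@contr_edge VH EH a b) [set w | val w \in tlift phi S1]
    [set w | val w \in tlift phi T1] k ->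
  routable (@contr_edge VH EH a b) [set w | val w \in tlift phi S2]
    [set w | val w \in tlift phi T2] k ->
  good_minor EG S1 T1 S2 T2 k (@contr_edge VH EH a b) (@contr_model VG VH phi a b).
Proof.
move: aT; rewrite !in_setU !negb_or => /andP[/andP[/andP[aS1 aT1] aS2] aT2] r1 r2.
split; [exact: contr_minor_model | exact: contr_terminals_ok | |].
- by apply: routable_sub r1; apply: tlift_contr.
- by apply: routable_sub r2; apply: tlift_contr.
Qed.

End ContractGoodMinor.

Unset Implicit Arguments. Set Strict Implicit.

Theorem lemma2p3
  (VG : finType) (EG : rel VG) (S1 T1 S2 T2 : {set VG}) (k : nat)
  (hG : simple_graph EG)
  (hd1 : [disjoint S1 & T1]) (hd2 : [disjoint S1 & S2]) (hd3 : [disjoint S1 & T2])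
  (hd4 : [disjoint T1 & S2]) (hd5 : [disjoint T1 & T2]) (hd6 : [disjoint S2 & T2])
  (hcard : [/\ #|S1| = k, #|T1| = k, #|S2| = k & #|T2| = k])
  (hdeg : forall x, x \in S1 :|: T1 :|: S2 :|: T2 -> degree EG x = 1)
  (hr1 : routable EG S1 T1 k) (hr2 : routable EG S2 T2 k)
  (VH : finType) (EH : rel VH) (phi : VH -> {set VG})
  (hH : simple_graph EH)
  (hmin : minimal_minor EG S1 T1 S2 T2 k EH phi)
  (R B : seq (seq VH))
  (hR : routing EH (tlift phi S1) (tlift phi T1) k R)
  (hB : routing EH (tlift phi S2) (tlift phi T2) k B) :
  ~ red_cycle R B /\ ~ blue_cycle R B.
Proof.
have [[model terms _ _] minimal] := hmin; have [EHsym EHirr] := hH; have [EGsym _] := hG.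
set terminals := tlift phi S1 :|: tlift phi T1 :|: tlift phi S2 :|: tlift phi T2.
have deg1 h y z : h \in terminals -> EH h y -> EH h z -> y = z.
  by rewrite /terminals -!tlift_setU; apply: (tlift_deg1 model hdeg).
have breaks a b : EH a b -> a \notin terminals -> b \notin terminals ->
    routable (@contr_edge VH EH a b) [set w | val w \in tlift phi S1]
      [set w | val w \in tlift phi T1] k ->
    routable (@contr_edge VH EH a b) [set w | val w \in tlift phi S2]
      [set w | val w \in tlift phi T2] k -> False.
  move=> ab aT bT r1 r2; case: (minimal a b ab) => _; apply.
  exact: (contr_good_minor EGsym model terms ab aT bT r1 r2).
have swap : tlift phi S2 :|: tlift phi T2 :|: tlift phi S1 :|: tlift phi T1 = terminals.
  by rewrite /terminals -setUA setUC !setUA.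
have T1S2 := tlift_disjoint phi hd4; rewrite disjoint_sym in T1S2.
split.
- exact: (no_alt_cycle EHsym EHirr hR hB T1S2 (tlift_disjoint phi hd3) deg1 breaks).
- apply: (no_alt_cycle EHsym EHirr hB hR (tlift_disjoint phi hd3) T1S2); rewrite swap //.
  by move=> a b ab aT bT r2 r1; apply: (breaks a b ab aT bT r1 r2).
Qed.
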